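(* Let $k\ge1$ and $a_1,\dots,a_k\in\Sigma$ with $a_i\neq a_{i+1}$ for $1\le i<k$, and let $L[a_1,\dots,a_k]=\Sigma^*a_1\Sigma^*a_2\Sigma^*\cdots\Sigma^*a_k\Sigma^*$. Then the MON-1qfa $A[a_1,\dots,a_k]$ recognizes $L[a_1,\dots,a_k]$ with cut-point $\lambda=\frac{1}{2^{2k+1}}$ isolated by $\delta=\frac{1}{2^{2(k+1)}}$.
   Context: A MON-1qfa over a finite alphabet $\Sigma$ is a tuple $A=\langle\Sigma\cup\{\#\},(O_c)_{c\in\Sigma\cup\{\#\}},\pi_0,F\rangle$, where $\pi_0\in\mathbb{C}^{1\times m}$ has norm $1$, each $O_c$ is an observable with spectral decomposition into orthogonal projectors $P_c(r)$, $r\in V(O_c)$, and $F\subseteq V(O_\#)$. For $x=x_1\cdots x_n$, with $\rho_0=\pi_0^\dagger\pi_0$ and $\rho_i=\sum_{r}P_{x_i}(r)\rho_{i-1}P_{x_i}(r)$, the acceptance probability is $p_A(x)=\sum_{r\in F}\mathrm{tr}(P_\#(r)\rho_n)$. $A$ recognizes $L$ with cut-point $\lambda$ isolated by $\delta>0$ if for all $x\in\Sigma^*$: $x\in L\Leftrightarrow p_A(x)>\lambda$, and $|p_A(x)-\lambda|\ge\delta$. Construction: let $S=\{a_1,\dots,a_k\}$; for $\alpha\in S$ let $j^{(\alpha)}_1<\dots<j^{(\alpha)}_{\#\alpha}$ be all indices $j$ with $a_j=\alpha$. Define the $(k+1)\times(k+1)$ matrices: $(P_\nearrow^{(k)}(\alpha))_{rs}=1$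 if $r=s$ and $r\notin\{j^{(\alpha)}_i,j^{(\alpha)}_i+1\}$ for all $i$; $=\frac12$ if $r,s\in\{j^{(\alpha)}_i,j^{(\alpha)}_i+1\}$ for some $i$; $=0$ otherwise. $(P_\searrow^{(k)}(\alpha))_{rs}=\frac12$ if $r=s\in\{j^{(\alpha)}_i,j^{(\alpha)}_i+1\}$ for some $i$; $=-\frac12$ if $r\neq s$ and $r,s\in\{j^{(\alpha)}_i,j^{(\alpha)}_i+1\}$ for some $i$; $=0$ otherwise. (These are complementary orthogonal projectors.) Let $e_j$ be the $j$-th standard basis row vector of length $k+1$. $A[a_1,\dots,a_k]$ is the MON-1qfa of dimension $k+1$ with initial state $\pi_0=e_1$; for $\alpha\in S$, $O_\alpha$ is the two-outcome observable with projectors $P_\nearrow^{(k)}(\alpha)$ and $P_\searrow^{(k)}(\alpha)$; for $\sigma\in\Sigma\setminus S$, $O_\sigma$ has the single projector $I_{(k+1)\times(k+1)}$; $O_\#$ is a two-outcome observable whose accepting outcome (the set $F$) has projector $e_{k+1}^Te_{k+1}$ and whose other outcome has projector $I-e_{k+1}^Te_{k+1}$. *)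

From HB Require Import structures.
From mathcomp Require Import all_boot all_order all_algebra algC.
Set Implicit Arguments. Unset Strict Implicit. Unset Printing Implicit Defensive.
Import Order.TTheory GRing.Theory Num.Theory.
Local Open Scope ring_scope.

(* An observable is represented by the list of orthogonal projectors  *)
(* P_c(r) of its spectral decomposition (one per outcome r in V(O_c)).*)
(* The end-marker observable O_# is given by the list of projectors   *)
(* P_#(r) for r in F (mq_acc) and the list of the other ones (mq_rej).*)
Record mon1qfa (Sigma : finType) (m : nat) := Mon1qfa {
  mq_pi0 : 'rV[algC]_m;
  mq_obs : Sigma -> seq 'M[algC]_m;
  mq_acc : seq 'M[algC]_m;
  mq_rej : seq 'M[algC]_m }.

Definition adjmx p q (A : 'M[algC]_(p, q)) : 'M[algC]_(q, p) := map_mx Num.conj A^T.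

Definition is_orth_projector m (P : 'M[algC]_m) : Prop :=
  adjmx P = P /\ P *m P = P.

Definition is_observable m (Ps : seq 'M[algC]_m) : Prop :=
  (forall P, P \in Ps -> is_orth_projector P) /\
  (forall i j, (i < size Ps)%N -> (j < size Ps)%N -> i != j ->
     nth 0 Ps i *m nth 0 Ps j = 0) /\
  \sum_(P <- Ps) P = 1%:M.

Definition is_mon1qfa (Sigma : finType) m (A : mon1qfa Sigma m) : Prop :=
  \sum_(i < m) `|mq_pi0 A 0 i| ^+ 2 = 1 /\
  (forall c, is_observable (mq_obs A c)) /\
  is_observable (mq_acc A ++ mq_rej A).

Definition rho0 (Sigma : finType) m (A : mon1qfa Sigma m) : 'M[algC]_m :=
  adjmx (mq_pi0 A) *m mq_pi0 A.

Definition rho_step (Sigma : finType) m (A : mon1qfa Sigma m) (c : Sigma)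
  (rho : 'M[algC]_m) : 'M[algC]_m :=
  \sum_(P <- mq_obs A c) P *m rho *m P.

Definition rho_final (Sigma : finType) m (A : mon1qfa Sigma m) (x : seq Sigma) :=
  foldl (fun rho c => rho_step A c rho) (rho0 A) x.

Definition accept_prob (Sigma : finType) m (A : mon1qfa Sigma m) (x : seq Sigma)
  : algC := \sum_(P <- mq_acc A) \tr (P *m rho_final A x).

Definition recognizes_isolated (Sigma : finType) m (A : mon1qfa Sigma m)
  (L : seq Sigma -> Prop) (lambda delta : algC) : Prop :=
  0 < delta /\
  forall x : seq Sigma,
    (L x <-> lambda < accept_prob A x) /\ delta <= `|accept_prob A x - lambda|.

Fixpoint inL (Sigma : finType) (a : seq Sigma) (x : seq Sigma) : Prop :=
  match a with
  | [::] => True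
  | c :: a' => exists u v, x = u ++ c :: v /\ inL a' v
  end.

(* Indices are 0-based: paper's index r in {1..k+1} is r-1 here, and  *)
(* paper's j with a_j = alpha (1<=j<=k) is j-1 here, with block        *)
(* {j-1, j}.                                                           *)
Section Construction.
Variables (Sigma : finType) (a : seq Sigma).
Let k := size a.

Definition in_block (alpha : Sigma) (r : nat) : bool :=
  has (fun j => (nth alpha a j == alpha) && ((r == j) || (r == j.+1)))
      (iota 0 k).

Definition same_block (alpha : Sigma) (r s : nat) : bool :=
  has (fun j => [&& nth alpha a j == alpha, (r == j) || (r == j.+1)
                  & (s == j) || (s == j.+1)])
      (iota 0 k).

Definition P_up (alpha : Sigma) : 'M[algC]_(k.+1) :=
  \matrix_(r < k.+1, s < k.+1)
    if (r == s :> nat) && ~~ in_block alpha r then 1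
    else if same_block alpha r s then 2^-1 else 0.

Definition P_down (alpha : Sigma) : 'M[algC]_(k.+1) :=
  \matrix_(r < k.+1, s < k.+1)
    if (r == s :> nat) && in_block alpha r then 2^-1
    else if (r != s :> nat) && same_block alpha r s then - 2^-1 else 0.

Definition A_constr : mon1qfa Sigma k.+1 :=
  {| mq_pi0 := delta_mx 0 ord0;
     mq_obs := fun sigma => if sigma \in a then [:: P_up sigma; P_down sigma]
                            else [:: 1%:M];
     mq_acc := [:: delta_mx ord_max ord_max];
     mq_rej := [:: 1%:M - delta_mx ord_max ord_max] |}.

End Construction.

From HB Require Import structures.
From mathcomp Require Import all_boot all_order all_algebra algC.
From mathcomp Require Import zify ring lra.
Set Implicit Arguments. Unset Strict Implicit. Unset Printing Implicit Defensive.
Import Order.TTheory GRing.Theory Num.Theory.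
Local Open Scope ring_scope.

(* Only the diagonal of the density matrix matters for acceptance, and on the
   diagonal reading a letter [c] averages the two entries of every [c]-block
   {j, j+1}; these blocks are disjoint because neighbouring letters of [a]
   differ.  Let [m] be the length of the prefix of [a] greedily matched by the
   input read so far.  Inductively the diagonal is nonincreasing, vanishes
   beyond [m], and carries at least [2^-m] at [m]: a block straddling [m]
   halves that entry but also moves [m] forward by one.  Hence the acceptance
   probability, the entry at [k], is [0] when [x] is not in the language and
   at least [2^-k] when it is; for [k >= 1] both lie at distance at least
   [delta] from [lambda]. *)

Lemma adjmx1 m : adjmx (1%:M : 'M[algC]_m) = 1%:M.
Proof. by apply/matrixP => i j; rewrite !mxE rmorph_nat eq_sym. Qed.

Lemma adjmxB m n (A B : 'M[algC]_(m, n)) : adjmx (A - B) = adjmx A - adjmx B.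
Proof. by apply/matrixP => i j; rewrite !mxE rmorphB. Qed.

Lemma adjmx_delta m n (i : 'I_m) (j : 'I_n) : adjmx (delta_mx i j) = delta_mx j i.
Proof. by apply/matrixP => r s; rewrite !mxE rmorph_nat andbC. Qed.

Lemma observable_pair m (P Q : 'M[algC]_m) :
  is_orth_projector P -> is_orth_projector Q ->
  P *m Q = 0 -> Q *m P = 0 -> P + Q = 1%:M -> is_observable [:: P; Q].
Proof.
move=> projP projQ PQ QP PQ1; split; [|split].
- by move=> X; rewrite !inE => /orP[]/eqP->.
- by case=> [|[|//]] [|[|//]].
- by rewrite !big_cons big_nil addr0.
Qed.

Lemma observable1 m : is_observable [:: (1%:M : 'M[algC]_m)].
Proof.
split; [|split].
- by move=> X; rewrite inE => /eqP->; split; rewrite ?adjmx1 ?mul1mx.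
- by case=> [|//] [|//].
- by rewrite big_cons big_nil addr0.
Qed.

Lemma observable_delta m (i : 'I_m) :
  is_observable [:: delta_mx i i; 1%:M - delta_mx i i].
Proof.
have ii : delta_mx i i *m delta_mx i i = delta_mx i i :> 'M[algC]_m.
  by rewrite mul_delta_mx.
apply: observable_pair.
- by split; rewrite ?adjmx_delta.
- split; first by rewrite adjmxB adjmx1 adjmx_delta.
  by rewrite !mulmxBl !mulmxBr !mul1mx ?mulmx1 ii subrr subr0.
- by rewrite mulmxBr mulmx1 ii subrr.
- by rewrite mulmxBl mul1mx ii subrr.
- by rewrite addrC subrK.
Qed.

Lemma mxtrace_delta_mul n (i : 'I_n) (A : 'M[algC]_n) : \tr (delta_mx i i *m A) = A i i.
Proof.
rewrite /mxtrace (bigD1 i) //= big1 => [|j ji].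
- rewrite addr0 mxE (bigD1 i) //= mxE !eqxx mul1r big1 ?addr0 // => j ji.
  by rewrite mxE eqxx (negbTE ji) mul0r.
- by rewrite mxE big1 // => t _; rewrite mxE (negbTE ji) mul0r.
Qed.

Lemma inL_subseq (T : finType) (a x : seq T) : inL a x <-> subseq a x.
Proof.
elim: a x => [|c a IHa] x /=; first by split=> // _; exact: sub0seq.
split=> [[u [v [-> /IHa av]]]|].
- by rewrite -[c :: a]cat0s cat_subseq ?sub0seq //= eqxx.
elim: x => [|y x IHx] //=; case: eqP => [<- /IHa ax|_ /IHx [u [v [-> av]]]].
- by exists [::], x.
- by exists (y :: u), v.
Qed.

Definition greedy_step (T : eqType) (a : seq T) (m : nat) (c : T) : nat :=
  if (m < size a)%N && (nth c a m == c) then m.+1 else m.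

Lemma greedy_step_stop (T : eqType) (a x : seq T) :
  foldl (greedy_step a) (size a) x = size a.
Proof. by elim: x => //= c x; rewrite /greedy_step ltnn. Qed.

Lemma subseq_drop_greedy (T : eqType) (a x : seq T) m : (m <= size a)%N ->
  subseq (drop m a) x = (foldl (greedy_step a) m x == size a).
Proof.
elim: x m => [|c x IHx] m m_le.
  by rewrite /= -size_eq0 size_drop subn_eq0 eqn_leq m_le.
case: (ltngtP m (size a)) m_le => // [m_lt|->] _; last first.
  by rewrite drop_size greedy_step_stop eqxx.
rewrite (drop_nth c) //= {2}/greedy_step m_lt /=; case: eqP => [_|_].
- by rewrite IHx.
- by rewrite -(drop_nth c) // IHx // ltnW.
Qed.

Lemma subseq_greedy (T : eqType) (a x : seq T) :
  subseq a x = (foldl (greedy_step a) 0%N x == size a).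
Proof. by rewrite -subseq_drop_greedy ?drop0. Qed.

Lemma isolated_cut_point (R : realFieldType) (k : nat) (b : bool) (p : R) :
  (0 < k)%N -> (b -> (2 ^+ k)^-1 <= p) -> (~~ b -> p = 0) ->
  (b <-> (2 ^+ (2 * k).+1)^-1 < p) /\
  (2 ^+ (2 * k.+1))^-1 <= `|p - (2 ^+ (2 * k).+1)^-1|.
Proof.
move=> k_gt0 hi lo; set t := (2 ^+ k : R)^-1 in hi *.
have -> : (2 ^+ (2 * k).+1 : R)^-1 = t ^+ 2 / 2.
  by rewrite -[(2 * k).+1]addn1 exprD expr1 [(2 * k)%N]mulnC exprM invfM exprVn.
have -> : (2 ^+ (2 * k.+1) : R)^-1 = t ^+ 2 / 4.
  by rewrite mulnS exprD [(2 * k)%N]mulnC exprM invfM exprVn mulrC -[2 ^+ 2]natrX.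
have t_gt0 : 0 < t by rewrite invr_gt0 exprn_gt0.
have t_le : t <= 2^-1.
  rewrite /t -(prednK k_gt0) exprS invfM ler_piMr ?invr_ge0 ?ler0n //.
  by rewrite invf_le1 ?exprn_gt0 // exprn_ege1 // ler1n.
have tt : t ^+ 2 <= t / 2 by rewrite expr2; nra.
have tt_gt0 : 0 < t ^+ 2 by rewrite exprn_gt0.
move: (t ^+ 2) tt tt_gt0 => T tt tt_gt0.
case: b hi lo => [/(_ isT) p_ge _|_ /(_ isT) ->].
- by split; [split=> // _; lra | rewrite ger0_norm; lra].
- split; first by split=> // ?; lra.
  by rewrite sub0r normrN ger0_norm; lra.
Qed.

Section Construction.
Variables (Sigma : finType) (a : seq Sigma).
Hypothesis a_adjacent_distinct : sorted (fun x y => x != y) a.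
Local Notation n := (size a).+1.

Definition block_lo (c : Sigma) (r : nat) : bool := (r < size a)%N && (nth c a r == c).
Definition block_hi (c : Sigma) (r : nat) : bool :=
  if r is r'.+1 then block_lo c r' else false.

(* The [c]-blocks {j, j+1} are pairwise disjoint ([block_lo_next]), so an index
   lies in at most one of them and [partner c] is an involution. *)
Definition partner (c : Sigma) (r : nat) : nat :=
  if block_lo c r then r.+1 else if block_hi c r then r.-1 else r.

Lemma block_lo_next c r : block_lo c r -> block_lo c r.+1 = false.
Proof.
case/andP=> _ /eqP a_r; apply/negbTE/andP => -[r1_lt /eqP a_r1].
by move/(sortedP c)/(_ r r1_lt): a_adjacent_distinct; rewrite a_r a_r1 eqxx.
Qed.

Lemma block_hi_lo c r : block_lo c r -> block_hi c r = false.
Proof. by case: r => //= r lo; apply: contraTF lo => /block_lo_next ->. Qed.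

Variant block_spec c r : bool -> bool -> nat -> Type :=
| BlockLo of block_lo c r : block_spec c r true false r.+1
| BlockHi of block_hi c r : block_spec c r false true r.-1
| NoBlock : block_spec c r false false r.

Lemma blockP c r : block_spec c r (block_lo c r) (block_hi c r) (partner c r).
Proof.
rewrite /partner; case lo: (block_lo c r); first by rewrite block_hi_lo //; constructor.
by case hi: (block_hi c r); constructor.
Qed.

Lemma in_blockE c r : in_block a c r = block_lo c r || block_hi c r.
Proof.
apply/hasP/orP => [[j]|].
  rewrite mem_iota => /andP[_ j_lt] /andP[a_j /orP[]/eqP->]; [left|right];
    by rewrite /= /block_lo j_lt.
case=> [/andP[r_lt a_r]|]; first by exists r; rewrite ?mem_iota ?a_r ?eqxx.
case: r => // r /andP[r_lt a_r].
by exists r; rewrite ?mem_iota ?a_r ?eqxx ?orbT.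
Qed.

Lemma same_blockE c r s :
  same_block a c r s = in_block a c r && ((s == r) || (s == partner c r)).
Proof.
rewrite in_blockE; apply/hasP/idP => [[j]|].
  rewrite mem_iota => /andP[_ j_lt] /and3P[a_j].
  have lo : block_lo c j by rewrite /block_lo j_lt.
  case/orP=> /eqP->; rewrite /partner ?lo //= ?eqSS ?orbT // => s_j.
  by rewrite (block_lo_next lo) /= lo orbC.
case: (blockP c r) => //= [/andP[r_lt a_r] s_r|].
  by exists r; rewrite ?mem_iota ?r_lt // a_r eqxx.
case: r => // r /andP[r_lt a_r] /= s_r.
by exists r; rewrite ?mem_iota ?r_lt // a_r eqxx orbT orbC.
Qed.

Lemma partner_lt c r : (r < n)%N -> (partner c r < n)%N.
Proof.
by case: (blockP c r) => [/andP[] | _ /(leq_ltn_trans (leq_pred r)) |].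
Qed.

Lemma partnerK c r : in_block a c r -> partner c (partner c r) = r.
Proof.
rewrite in_blockE; case: (blockP c r) => [lo _|hi _|//].
  by rewrite /partner (block_lo_next lo) /= lo.
by case: r hi => // r /= lo; rewrite /partner lo.
Qed.

Lemma in_block_partner c r : in_block a c (partner c r) = in_block a c r.
Proof.
rewrite !in_blockE /partner; case lo: (block_lo c r); first by rewrite /= lo orbT.
case: r lo => [|r] lo /=; first by rewrite lo.
by case hi: (block_lo c r); rewrite /= ?hi ?lo.
Qed.

Lemma partner_id c r : ~~ in_block a c r -> partner c r = r.
Proof. by rewrite in_blockE; case: (blockP c r). Qed.

Lemma partner_neq c r : in_block a c r -> partner c r != r.
Proof.
rewrite in_blockE; case: (blockP c r) => [_ _|hi _|//]; first by rewrite gtn_eqF.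
by case: r hi => //= r _; rewrite ltn_eqF.
Qed.

Definition opartner c (r : 'I_n) : 'I_n := inord (partner c r).

Lemma opartnerE c (r : 'I_n) : opartner c r = partner c r :> nat.
Proof. by rewrite inordK ?partner_lt. Qed.

Lemma opartnerK c (r : 'I_n) : in_block a c r -> opartner c (opartner c r) = r.
Proof. by move=> inb; apply: val_inj => /=; rewrite !opartnerE partnerK. Qed.

Lemma in_block_opartner c (r : 'I_n) : in_block a c (opartner c r) = in_block a c r.
Proof. by rewrite opartnerE in_block_partner. Qed.

Lemma opartner_neq c (r : 'I_n) : in_block a c r -> opartner c r != r.
Proof. by move=> inb; rewrite -val_eqE /= opartnerE partner_neq. Qed.

Lemma opartner_id c (r : 'I_n) : ~~ in_block a c r -> opartner c r = r.
Proof. by move=> notin; apply: val_inj => /=; rewrite opartnerE partner_id. Qed.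

Definition pair_mx c (d d' g : algC) : 'M[algC]_n :=
  \matrix_(r, s) if s == r then (if in_block a c r then d else d')
                 else if s == opartner c r then g else 0.

Lemma pair_mx_rowE c d d' g r (f : 'I_n -> algC) :
  \sum_t pair_mx c d d' g r t * f t =
  if in_block a c r then d * f r + g * f (opartner c r) else d' * f r.
Proof.
rewrite (bigD1 r) //= mxE eqxx; case: ifP => inb.
- rewrite (bigD1 (opartner c r)) ?opartner_neq //= mxE (negbTE (opartner_neq inb)).
  rewrite eqxx addrA big1 ?addr0 // => t /andP[tr tp].
  by rewrite mxE (negbTE tr) (negbTE tp) mul0r.
- rewrite big1 ?addr0 // => t tr.
  by rewrite mxE (negbTE tr) opartner_id ?inb // (negbTE tr) mul0r.
Qed.

Lemma pair_mx_sym c d d' g (r s : 'I_n) : pair_mx c d d' g s r = pair_mx c d d' g r s.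
Proof.
rewrite !mxE; have [->//|sr] := eqVneq s r.
have [rs|rs] := eqVneq r (opartner c s).
  have inb : in_block a c s.
    by apply: contraNT sr => /opartner_id ss; rewrite rs ss eqxx.
  by rewrite rs opartnerK // eqxx.
have [sr'|//] := eqVneq s (opartner c r).
have inb : in_block a c r.
  by apply: contraNT sr => /opartner_id rr; rewrite sr' rr eqxx.
by move: rs; rewrite sr' opartnerK // eqxx.
Qed.

Lemma pair_mxM c d1 d1' g1 d2 d2' g2 :
  pair_mx c d1 d1' g1 *m pair_mx c d2 d2' g2 =
  pair_mx c (d1 * d2 + g1 * g2) (d1' * d2') (d1 * g2 + g1 * d2).
Proof.
apply/matrixP => r s; rewrite mxE pair_mx_rowE !mxE in_block_opartner.
case: ifP => inb; last by rewrite opartner_id ?inb //; case: (s == r); rewrite ?mulr0.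
rewrite opartnerK // inb; have [->|sr] := eqVneq s r.
  by rewrite eq_sym (negbTE (opartner_neq inb)).
by case: (s == opartner c r); rewrite ?mulr0 ?addr0.
Qed.

Lemma pair_mxD c d1 d1' g1 d2 d2' g2 :
  pair_mx c d1 d1' g1 + pair_mx c d2 d2' g2 = pair_mx c (d1 + d2) (d1' + d2') (g1 + g2).
Proof.
apply/matrixP => r s; rewrite !mxE.
by case: ifP => _; [case: ifP | case: ifP => _ //; rewrite addr0].
Qed.

Lemma pair_mx0 c : pair_mx c 0 0 0 = 0.
Proof. by apply/matrixP => r s; rewrite !mxE; case: ifP => _; [case: ifP|case: ifP]. Qed.

Lemma pair_mx1 c : pair_mx c 1 1 0 = 1%:M.
Proof.
apply/matrixP => r s; rewrite !mxE eq_sym.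
by case: (eqVneq r s) => _ //; [case: ifP | case: ifP].
Qed.

Lemma adjmx_pair_mx c d d' g : d \is Num.real -> d' \is Num.real -> g \is Num.real ->
  adjmx (pair_mx c d d' g) = pair_mx c d d' g.
Proof.
move=> dR d'R gR; apply/matrixP => r s; rewrite /adjmx 2!mxE pair_mx_sym mxE.
case: ifP => _; first by case: ifP => _; exact: conj_Creal.
by case: ifP => _; rewrite ?conjC0 // conj_Creal.
Qed.

Lemma pair_mx_conj_diag c d d' g (rho : 'M[algC]_n) (r : 'I_n) :
  (pair_mx c d d' g *m rho *m pair_mx c d d' g) r r =
  let r' := opartner c r in
  if in_block a c r
  then d * (d * rho r r + g * rho r' r) + g * (d * rho r r' + g * rho r' r')
  else d' * (d' * rho r r).
Proof.
rewrite mxE; under eq_bigr => t _ do rewrite mulrC pair_mx_sym.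
by rewrite pair_mx_rowE !mxE !pair_mx_rowE /=; case: (in_block a c r).
Qed.

Lemma real_half : (2^-1 : algC) \is Num.real.
Proof. by rewrite rpredV realn. Qed.

Lemma P_upE c : P_up a c = pair_mx c 2^-1 1 2^-1.
Proof.
apply/matrixP => r s; rewrite !mxE same_blockE -!val_eqE /= opartnerE.
case: (boolP (in_block a c r)) => [_|/partner_id ->];
  by rewrite eq_sym; case: (s == r :> nat).
Qed.

Lemma P_downE c : P_down a c = pair_mx c 2^-1 0 (- 2^-1).
Proof.
apply/matrixP => r s; rewrite !mxE same_blockE -!val_eqE /= opartnerE.
case: (boolP (in_block a c r)) => [_|/partner_id ->];
  by rewrite eq_sym; case: (s == r :> nat).
Qed.

Lemma observable_letter c : is_observable (mq_obs (A_constr a) c).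
Proof.
rewrite /=; case: ifP => _; last exact: observable1.
have realNhalf : - 2^-1 \is @Num.real algC by rewrite rpredN real_half.
apply: observable_pair; rewrite ?P_upE ?P_downE ?pair_mxM ?pair_mxD.
- split; first by rewrite adjmx_pair_mx ?real_half.
  by rewrite pair_mxM; congr pair_mx; field.
- split; first by rewrite adjmx_pair_mx ?real_half.
  by rewrite pair_mxM; congr pair_mx; field.
- by rewrite -(pair_mx0 c); congr pair_mx; field.
- by rewrite -(pair_mx0 c); congr pair_mx; field.
- by rewrite -(pair_mx1 c); congr pair_mx; field.
Qed.

Lemma is_mon1qfa_A_constr : is_mon1qfa (A_constr a).
Proof.
split; [|split; [exact: observable_letter | exact: observable_delta]].
rewrite /= (bigD1 ord0) //= mxE !eqxx normr1 expr1n big1 ?addr0 // => i i0.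
by rewrite mxE (negbTE i0) andbF normr0 expr0n.
Qed.

Lemma in_block_mem c r : in_block a c r -> c \in a.
Proof.
by case/hasP=> j; rewrite mem_iota => /andP[_ j_lt] /andP[/eqP <- _]; rewrite mem_nth.
Qed.

Lemma rho_step_diag c (rho : 'M[algC]_n) r :
  rho_step (A_constr a) c rho r r =
  if in_block a c r then (rho r r + rho (opartner c r) (opartner c r)) / 2 else rho r r.
Proof.
rewrite /rho_step /=; case: ifP => ca.
  rewrite !big_cons big_nil addr0 mxE P_upE P_downE !pair_mx_conj_diag /=.
  by case: (in_block a c r); field.
rewrite big_cons big_nil addr0 mul1mx mulmx1.
by case: ifP => // /in_block_mem; rewrite ca.
Qed.

Definition avg_step c (D : nat -> rat) (r : nat) : rat :=
  if in_block a c r then (D r + D (partner c r)) / 2 else D r.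

Lemma rho_diag_foldl x (rho : 'M[algC]_n) (D : nat -> rat) :
  (forall r : 'I_n, rho r r = ratr (D r)) ->
  forall r : 'I_n, foldl (fun rho c => rho_step (A_constr a) c rho) rho x r r =
                   ratr (foldl (fun D c => avg_step c D) D x r).
Proof.
elim: x rho D => //= c x IHx rho D rhoD; apply: IHx => r.
rewrite rho_step_diag /avg_step -opartnerE !rhoD.
by case: (in_block a c r); rewrite // fmorph_div rmorphD rmorph_nat.
Qed.

Lemma accept_prob_A_constr x :
  accept_prob (A_constr a) x =
  ratr (foldl (fun D c => avg_step c D) (fun r => (r == 0)%N%:R) x (size a)).
Proof.
rewrite /accept_prob /= big_cons big_nil addr0 mxtrace_delta_mul.
apply: (rho_diag_foldl x _ (@ord_max (size a))) => r.
by rewrite /rho0 /= adjmx_delta mul_delta_mx mxE andbb ratr_nat.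
Qed.

Lemma avg_stepE c D r : avg_step c D r =
  if block_lo c r then (D r + D r.+1) / 2
  else if block_hi c r then (D r.-1 + D r) / 2 else D r.
Proof. by rewrite /avg_step in_blockE; case: (blockP c r); rewrite //= addrC. Qed.

Definition nonincreasing_upto (k : nat) (D : nat -> rat) :=
  forall r, (r < k)%N -> D r.+1 <= D r.

Lemma avg_step_nonincreasing c D :
  nonincreasing_upto (size a) D -> nonincreasing_upto (size a) (avg_step c D).
Proof.
move=> D_noninc r r_lt; case lo: (block_lo c r).
  by rewrite !avg_stepE /= lo (block_lo_next lo).
have next_le : avg_step c D r.+1 <= D r.+1.
  by rewrite avg_stepE /= lo; case: ifP => // /andP[/D_noninc]; lra.
have le_cur : D r <= avg_step c D r.
  rewrite avg_stepE lo; case: r r_lt {lo next_le} => [|r] //= /ltnW/D_noninc.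
  by case: ifP => //; lra.
by have := D_noninc _ r_lt; lra.
Qed.

Definition diag_inv (D : nat -> rat) (m : nat) := [/\ (m <= size a)%N,
  nonincreasing_upto (size a) D,
  forall r, (m < r <= size a)%N -> D r = 0 &
  (2 ^+ m)^-1 <= D m].

Lemma diag_inv_step c D m :
  diag_inv D m -> diag_inv (avg_step c D) (greedy_step a m c).
Proof.
rewrite /greedy_step -/(block_lo c m).
case=> m_le D_noninc D_zero D_m; split; first by case: ifP => // /andP[].
- exact: avg_step_nonincreasing.
- move=> r /andP[m'_lt r_le].
  have m_lt : (m < r)%N by case: ifP m'_lt => // _; exact: ltnW.
  rewrite avg_stepE; case: ifP => [/andP[r_lt _]|_].
    by rewrite !D_zero ?addr0 ?mul0r //; lia.
  case: ifP => [|_]; last by rewrite D_zero //; lia.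
  case: r m'_lt r_le m_lt => // r m'_lt r_le m_lt /= lo.
  have m_neq : m != r by apply: contraTneq m'_lt => ->; rewrite lo ltnn.
  by rewrite !D_zero ?addr0 ?mul0r //; lia.
- rewrite avg_stepE; case lo: (block_lo c m).
  + rewrite (block_lo_next lo) /= lo (D_zero m.+1); last by case/andP: lo; lia.
    by rewrite exprS invfM; lra.
  + rewrite lo; case: ifP => // hi.
    case: m m_le D_zero D_m hi {lo} => // m m_le _ D_m _ /=.
    by have := D_noninc m m_le; lra.
Qed.

Lemma diag_inv_foldl x D m : diag_inv D m ->
  diag_inv (foldl (fun D c => avg_step c D) D x) (foldl (greedy_step a) m x).
Proof. by elim: x D m => //= c x IHx D m inv; apply/IHx/diag_inv_step. Qed.

Lemma diag_inv_start : diag_inv (fun r => (r == 0)%N%:R) 0%N.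
Proof. by split=> // [[]]. Qed.

End Construction.

Lemma ratr_inv_pow2 n : (2 ^+ n : algC)^-1 = ratr (2 ^+ n)^-1.
Proof. by rewrite fmorphV rmorphXn rmorph_nat. Qed.

Theorem theorem5 (Sigma : finType) (a : seq Sigma) :
  (1 <= size a)%N ->
  sorted (fun x y => x != y) a ->
  is_mon1qfa (A_constr a) /\
  recognizes_isolated (A_constr a) (inL a)
    ((2 ^+ (2 * size a).+1)^-1) ((2 ^+ (2 * (size a).+1))^-1).
Proof.
move=> a_gt0 a_adj; split; first exact: is_mon1qfa_A_constr.
split; first by rewrite invr_gt0 exprn_gt0 // ltr0n.
move=> x; rewrite inL_subseq subseq_greedy (accept_prob_A_constr a_adj) !ratr_inv_pow2.
rewrite -rmorphB -ratr_norm ler_rat ltr_rat.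
have [m_le _ D_zero D_m] := diag_inv_foldl a_adj x (diag_inv_start a).
apply: isolated_cut_point => // [/eqP m_k|m_k]; first by rewrite -m_k.
by apply: D_zero; rewrite ltn_neqAle m_k m_le /=.
Qed.
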